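(* Let $G$ be a finite, simple, undirected, connected graph whose vertex set $V(G)$ is a set of integers. Then there exists an elimination tree $T$ of $G$ whose depth equals the treedepth of $G$ and which has the following property: for every vertex $w \in V(G)$ and every vertex $v \in V(G)$ that dominates $w$ in $G$, the vertex $w$ is not an ancestor of $v$ in $T$.
   Context: For a vertex $x$ of $G$, $N(x)$ denotes the set of neighbours of $x$ in $G$. A treedepth decomposition of $G$ is a rooted forest $F$ on vertex set $V(G)$ such that for every edge $\{u,v\}$ of $G$, either $u$ is an ancestor of $v$ or $v$ is an ancestor of $u$ in $F$. The depth of a rooted forest is the maximum number of vertices on a root-to-leaf path. The treedepth of $G$ is the minimum depth of a treedepth decomposition of $G$. An elimination tree of a connected graph $G$ is defined recursively: if $G$ has a single vertex, its elimination tree is $G$ itself (a single root); otherwise, choose a vertex $v$ of $G$, let $F$ be a forest consisting of one elimination tree for each connected component of $G - v$, and form a rooted tree by making $v$ the parent of every root of $F$. Given distinct vertices $v, w \in V(G)$ (adjacent or not), $v$ dominates $w$ in $G$ if either (1) $N(v) \setminus \{w\}$ is a proper superset of $N(w) \setminus \{v\}$, or (2) $N(v) \setminus \{w\} = N(w) \setminus \{v\}$ and $v > w$ (comparison as integers). *)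

From mathcomp Require Import all_boot all_order all_algebra finmap.
Set Implicit Arguments.
Unset Strict Implicit.
Unset Printing Implicit Defensive.

Section Graphs.
Variable T : finType.
(* A simple graph on vertex type T: [e] is assumed symmetric and irreflexive
   in the theorem statement. *)
Variable e : rel T.

Definition nbhd (x : T) : {set T} := [set y | e x y].

Definition induced (S : {set T}) : rel T :=
  [rel x y | [&& x \in S, y \in S & e x y]].

Definition connected_in (S : {set T}) : Prop :=
  forall x y, x \in S -> y \in S -> connect (induced S) x y.

Definition component (S C : {set T}) : Prop :=
  exists2 x, x \in S & C = [set y | (y \in S) && connect (induced S) x y].

(* Rooted forests on T are represented by a parent function. *)
Definition up (par : T -> option T) (k : nat) (x : T) : option T :=
  iter k (fun o => obind par o) (Some x).

Definition ancestor (par : T -> option T) (u v : T) : Prop :=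
  exists2 k, 0 < k & up par k v = Some u.

Definition rooted_forest (par : T -> option T) : Prop :=
  forall x, exists k, up par k x = None.

Definition root_path (par : T -> option T) (x : T) : {set T} :=
  [set u | [exists k : 'I_#|T|.+1, up par k x == Some u]].

Definition forest_depth (par : T -> option T) : nat :=
  \max_(x : T) #|root_path par x|.

Definition td_decomposition (par : T -> option T) : Prop :=
  rooted_forest par /\
  forall u v, e u v -> ancestor par u v \/ ancestor par v u.

Definition is_treedepth (d : nat) : Prop :=
  (exists2 par, td_decomposition par & forest_depth par = d) /\
  (forall par, td_decomposition par -> d <= forest_depth par).

(* elim_tree par S r : the restriction of the parent function par to S
   is an elimination tree of G[S] with root r (built recursively: r is
   chosen, and each component C of G[S] - r carries an elimination tree
   whose root c has parent r). *)
Inductive elim_tree (par : T -> option T) : {set T} -> T -> Prop :=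
| ElimTree (S : {set T}) (r : T) :
    r \in S ->
    (forall C, component (S :\ r) C ->
       exists2 c, c \in C & par c = Some r /\ elim_tree par C c) ->
    elim_tree par S r.

Definition dominates (lab : T -> int) (v w : T) : bool :=
  (v != w) &&
  (((nbhd w :\ v) \proper (nbhd v :\ w)) ||
   ((nbhd v :\ w == nbhd w :\ v) && (lab w < lab v)%R)).

End Graphs.

(* Among the elimination trees of G choose one of minimum depth and, among
   those, one minimising path_weight wt: the sum over all vertices x of wt x
   times the number of vertices on the path from x to the root, where wt
   orders the vertices by degree and then by label, so that wt w < wt v
   whenever v dominates w.
   A treedepth decomposition F of a connected graph can be normalised into an
   elimination tree whose root paths are contained in those of F: take as root
   the F-highest vertex, which is an F-ancestor of all others, and recurse into
   the components of the remaining graph.  Hence the chosen tree has the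
   treedepth as depth, and it minimises path_weight among all treedepth
   decompositions of that depth.
   If w were an ancestor of a vertex v dominating w, exchanging v and w would
   give a treedepth decomposition, because every neighbour of w other than v is
   a neighbour of v, of the same depth and of strictly smaller path_weight. *)

From mathcomp Require Import all_boot all_order all_algebra finmap.
From mathcomp Require Import perm zify.
From Stdlib Require Import Classical IndefiniteDescription Wf_nat.

Set Implicit Arguments. Unset Strict Implicit. Unset Printing Implicit Defensive.
Import Order.TTheory.

Section Forest.
Variable T : finType.
Implicit Types (p : T -> option T) (x u v : T).

Lemma upS p k x : up p k.+1 x = obind p (up p k x).
Proof. by []. Qed.

Lemma upD p i j x : up p (i + j) x = obind (up p i) (up p j x).
Proof. by rewrite /up iterD; case: (iter j _ _) => [//|]; elim: i => //= i ->. Qed.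

Lemma up_None_le p i j x : i <= j -> up p i x = None -> up p j x = None.
Proof. by move=> /subnK <- hi; rewrite upD hi. Qed.

Lemma up_neq_self p k x : rooted_forest p -> 0 < k -> up p k x <> Some x.
Proof.
move=> rf k_gt0 hk; have [n hn] := rf x.
have upMk m : up p (m * k) x = Some x by elim: m => // m IH; rewrite mulSn upD IH.
by move: (up_None_le (leq_pmulr n k_gt0) hn); rewrite upMk.
Qed.

Lemma up_Some_lt_card p k x u : rooted_forest p -> up p k x = Some u -> k < #|T|.
Proof.
move=> rf hk; pose g (i : 'I_k.+1) := odflt x (up p i x).
have up_g (i : 'I_k.+1) : up p i x = Some (g i).
  rewrite /g; case E: (up p i x) => //.
  by move: hk; rewrite (up_None_le (ltn_ord i : i <= k) E).
suff /leq_card : injective g by rewrite card_ord.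
have g_lt (i j : 'I_k.+1) : i < j -> g i <> g j.
  move=> ij gij; have ji_gt0 : 0 < j - i by rewrite subn_gt0.
  apply: (up_neq_self (x := g j) rf ji_gt0); have up_j := up_g j.
  by rewrite -(subnK (ltnW ij)) upD up_g /= gij in up_j.
move=> i j gij; apply: val_inj.
by case: (ltngtP i j) => // ij; [case: (g_lt _ _ ij) | case: (g_lt _ _ ij)].
Qed.

Lemma ancestor_trans p a b c : ancestor p a b -> ancestor p b c -> ancestor p a c.
Proof.
by move=> [i i_gt0 hi] [j _ hj]; exists (i + j); rewrite ?addn_gt0 ?i_gt0 // upD hj.
Qed.

Lemma ancestor_irrefl p x : rooted_forest p -> ~ ancestor p x x.
Proof. by move=> rf [k k_gt0]; apply: up_neq_self. Qed.

Lemma ancestors_comparable p a b x : ancestor p a x -> ancestor p b x ->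
  [\/ a = b, ancestor p a b | ancestor p b a].
Proof.
move=> [i i_gt0 hi] [j j_gt0 hj]; case: (ltngtP i j) => ij.
- apply: Or33; exists (j - i); first by rewrite subn_gt0.
  by rewrite -(subnK (ltnW ij)) upD hi in hj.
- apply: Or32; exists (i - j); first by rewrite subn_gt0.
  by rewrite -(subnK (ltnW ij)) upD hj in hi.
- by apply: Or31; move: hi; rewrite ij hj => -[].
Qed.

Definition ancestor_or_self p u x := u = x \/ ancestor p u x.

Lemma ancestor_or_self_trans p a b c :
  ancestor_or_self p a b -> ancestor_or_self p b c -> ancestor_or_self p a c.
Proof.
move=> [->|ab] [<-|bc]; [by left | by right | by right | right].
exact: ancestor_trans ab bc.
Qed.

Lemma mem_root_path {p u x} : rooted_forest p ->
  (u \in root_path p x) <-> ancestor_or_self p u x.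
Proof.
move=> rf; rewrite inE; split.
- move=> /existsP [[[|k] _] /= /eqP hk]; first by left; case: hk.
  by right; exists k.+1.
- case=> [->|[k _ hk]]; apply/existsP; first by exists ord0.
  have k_lt : k < #|T|.+1 by rewrite ltnS ltnW // (up_Some_lt_card rf hk).
  by exists (Ordinal k_lt); rewrite hk.
Qed.

Lemma card_root_path_lt p u x : rooted_forest p -> ancestor p u x ->
  #|root_path p u| < #|root_path p x|.
Proof.
move=> rf ux; apply: proper_card; apply/properP; split.
  apply/subsetP=> a /(mem_root_path rf) au; apply/(mem_root_path rf).
  by apply: ancestor_or_self_trans au _; right.
exists x; first by apply/(mem_root_path rf); left.
apply/negP=> /(mem_root_path rf) [xu|xu]; first by subst; exact: ancestor_irrefl rf ux.
exact: ancestor_irrefl rf (ancestor_trans xu ux).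
Qed.

Definition path_weight (wt : T -> nat) p := \sum_x wt x * #|root_path p x|.

Lemma forest_depth_le p F : (forall x, root_path p x \subset root_path F x) ->
  forest_depth p <= forest_depth F.
Proof.
move=> pF; apply/bigmax_leqP=> x _.
exact: leq_trans (subset_leq_card (pF x)) (leq_bigmax x).
Qed.

Lemma path_weight_le wt p F : (forall x, root_path p x \subset root_path F x) ->
  path_weight wt p <= path_weight wt F.
Proof. by move=> pF; apply: leq_sum => x _; rewrite leq_mul2l subset_leq_card ?orbT. Qed.

End Forest.

Lemma connect_preserved (T : finType) (R : rel T) (Q : T -> Prop) x y :
  (forall a b, Q a -> R a b -> Q b) -> connect R x y -> Q x -> Q y.
Proof.
move=> QR /connectP [s Rs ->]; elim: s x Rs => //= a s IH x /andP[xa Rs] Qx.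
exact: IH Rs (QR _ _ Qx xa).
Qed.

Section Components.
Variables (T : finType) (e : rel T).
Hypothesis e_sym : symmetric e.
Implicit Types (S C : {set T}) (x y : T).

Definition comp_of S x := [set y | (y \in S) && connect (induced e S) x y].

Lemma induced_sym S : symmetric (induced e S).
Proof. by move=> x y; rewrite /induced /= e_sym andbCA. Qed.

Lemma component_comp_of S x : x \in S -> component e S (comp_of S x).
Proof. by exists x. Qed.

Lemma mem_comp_of S x : x \in S -> x \in comp_of S x.
Proof. by move=> xS; rewrite inE xS connect0. Qed.

Lemma component_sub S C : component e S C -> {subset C <= S}.
Proof. by move=> [x _ ->] y; rewrite inE => /andP[]. Qed.

Lemma component_eq S C x : component e S C -> x \in C -> C = comp_of S x.
Proof.
move=> [x0 _ ->]; rewrite inE => /andP[_ x0x]; apply/setP=> y; rewrite !inE.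
case: (y \in S) => //=; apply/idP/idP; last exact: connect_trans.
by apply: connect_trans; rewrite (sym_connect_sym (induced_sym S)).
Qed.

Lemma component_closed S C x y :
  component e S C -> x \in C -> y \in S -> e x y -> y \in C.
Proof.
move=> hC xC yS exy; rewrite (component_eq hC xC) inE yS connect1 //.
by rewrite /induced /= (component_sub hC xC) yS.
Qed.

Lemma component_connected S C : component e S C -> connected_in e C.
Proof.
move=> hC x y xC yC.
have /[!inE] /andP[_ xy] : y \in comp_of S x by rewrite -(component_eq hC xC).
have step a b : a \in C /\ connect (induced e C) x a -> induced e S a b ->
    b \in C /\ connect (induced e C) x b.
  move=> [aC xa] /and3P[_ bS eab]; have bC := component_closed hC aC bS eab.
  by split=> //; apply: connect_trans xa (connect1 _); rewrite /induced /= aC bC.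
by case: (connect_preserved step xy (conj xC (connect0 _ x))).
Qed.

Lemma component_card_lt S C r : r \in S -> component e (S :\ r) C -> #|C| < #|S|.
Proof.
move=> rS hC; apply: proper_card; apply: sub_proper_trans (properD1 rS).
by apply/subsetP; apply: component_sub hC.
Qed.

End Components.

Section ElimTreeInd.
Variables (T : finType) (e : rel T) (p : T -> option T).
Variable P : {set T} -> T -> Prop.
Hypothesis IH : forall (S : {set T}) (r : T), r \in S ->
  (forall C, component e (S :\ r) C ->
     exists2 c, c \in C & [/\ p c = Some r, elim_tree e p C c & P C c]) ->
  P S r.

(* The generated elim_tree_ind has no induction hypothesis for the
   occurrences of elim_tree nested under exists2 and /\. *)
Fixpoint elim_tree_nested_ind S r (t : elim_tree e p S r) : P S r :=
  match t with
  | ElimTree S0 r0 r0S0 sub => @IH S0 r0 r0S0 (fun C hC =>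
      match sub C hC with
      | ex_intro2 c cC (conj pc tc) =>
          ex_intro2 _ _ c cC (And3 pc tc (@elim_tree_nested_ind C c tc))
      end)
  end.

End ElimTreeInd.

Section ElimTrees.
Variables (T : finType) (e : rel T).
Hypotheses (e_sym : symmetric e) (e_irr : irreflexive e).
Implicit Types (p : T -> option T) (S C : {set T}) (x y r : T).

Lemma elim_tree_root p S r : elim_tree e p S r -> r \in S.
Proof. by case. Qed.

Lemma elim_tree_eq_in p p' S r :
  {in S, p =1 p'} -> elim_tree e p S r -> elim_tree e p' S r.
Proof.
move=> + t; elim/elim_tree_nested_ind: t => {}S {}r rS IH pp'.
constructor=> // C hC; have [c cC [pc _ IHC]] := IH C hC.
have CS z : z \in C -> z \in S by move/(component_sub hC); rewrite inE => /andP[].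
by exists c => //; split; [rewrite -pp' ?CS | apply: IHC => z /CS /pp'].
Qed.

Lemma elim_tree_reach p S r x : elim_tree e p S r -> x \in S ->
  exists k, up p k x = Some r.
Proof.
move=> t; elim/elim_tree_nested_ind: t x => {}S {}r rS IH x xS.
have [->|xr] := eqVneq x r; first by exists 0.
have xSr : x \in S :\ r by rewrite in_setD1 xr.
have [c _ [pc _ /(_ x (mem_comp_of e xSr)) [k hk]]] := IH _ (component_comp_of e xSr).
by exists k.+1; rewrite upS hk.
Qed.

Lemma elim_tree_root_ancestor p S r x : elim_tree e p S r -> x \in S -> x != r ->
  ancestor p r x.
Proof.
move=> t xS xr; have [[|k] hk] := elim_tree_reach t xS.
  by case: hk => xr'; rewrite xr' eqxx in xr.
by exists k.+1.
Qed.

Lemma elim_tree_edge p S r x y : elim_tree e p S r -> x \in S -> y \in S -> e x y ->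
  ancestor p x y \/ ancestor p y x.
Proof.
move=> t; move: (t); elim/elim_tree_nested_ind: t x y => {}S {}r rS IH x y t xS yS exy.
have neq_r z : e r z -> z != r by apply: contraTneq => ->; rewrite e_irr.
have [xr|xr] := eqVneq x r.
  by subst x; left; apply: elim_tree_root_ancestor t yS (neq_r y exy).
have [yr|yr] := eqVneq y r.
  by subst y; right; apply: elim_tree_root_ancestor t xS (neq_r x _); rewrite e_sym.
have xSr : x \in S :\ r by rewrite in_setD1 xr.
have ySr : y \in S :\ r by rewrite in_setD1 yr.
have hC := component_comp_of e xSr.
have [c _ [_ tc IHC]] := IH _ hC.
apply: (IHC x y tc (mem_comp_of e xSr) _ exy).
exact: (component_closed e_sym hC (mem_comp_of e xSr) ySr exy).
Qed.

Lemma elim_tree_td p r : p r = None -> elim_tree e p [set: T] r -> td_decomposition e p.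
Proof.
move=> pr t; split=> [x|u v uv]; last exact: elim_tree_edge t _ _ uv.
by have [k hk] := elim_tree_reach t (in_setT x); exists k.+2; rewrite !upS hk /= pr.
Qed.

Section Normalization.
Variable F : T -> option T.
Hypothesis F_td : td_decomposition e F.

Lemma td_top S x0 : x0 \in S -> connected_in e S ->
  exists2 r, r \in S & forall x, x \in S -> ancestor_or_self F r x.
Proof.
move=> x0S connS; have rf := F_td.1.
case: (arg_minnP (fun x => #|root_path F x|) x0S) => r rS r_min.
exists r => // x xS; apply: (connect_preserved _ (connS _ _ rS xS)); last by left.
move=> y z ry /and3P[_ zS eyz].
have zr : ~ ancestor F z r by move/(card_root_path_lt rf); rewrite ltnNge r_min.
case: (F_td.2 _ _ eyz) => [yz|zy]; first by apply: ancestor_or_self_trans ry _; right.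
case: ry => [ry|ry]; first by subst y.
by case: (ancestors_comparable ry zy) => [->|rz|/zr]; [left|right|].
Qed.

(* The parent q of the root is a parameter so that the trees built for the
   components of S minus the root can be hung below it. *)
Lemma elim_tree_below S x0 q : x0 \in S -> connected_in e S ->
  exists p r, [/\ p r = q, elim_tree e p S r &
    forall x y, x \in S :\ r -> p x = Some y -> ancestor F y x].
Proof.
have [n ltSn] := ubnP #|S|; elim: n => // n IHn in S x0 q ltSn *.
move=> x0S connS; have [r rS r_top] := td_top x0S connS.
pose below C (t : (T -> option T) * T) := [/\ t.1 t.2 = Some r, elim_tree e t.1 C t.2 &
  forall x y, x \in C :\ t.2 -> t.1 x = Some y -> ancestor F y x].
have [g g_below] : exists g, forall C, component e (S :\ r) C -> below C (g C).
  apply: (functional_choice (fun C t => component e (S :\ r) C -> below C t)) => C.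
  have [hC|] := classic (component e (S :\ r) C); last by exists (F, r).
  have [x xC] : exists x, x \in C by case: hC => x xSr ->; exists x; apply: mem_comp_of.
  have ltCn : #|C| < n := leq_trans (component_card_lt rS hC) ltSn.
  have [pC [c [pC_c tC pC_below]]] := IHn C x (Some r) ltCn xC (component_connected e_sym hC).
  by exists (pC, c).
pose p x := if x \in S :\ r then (g (comp_of e (S :\ r) x)).1 x else q.
have p_comp C x : component e (S :\ r) C -> x \in C -> p x = (g C).1 x.
  move=> hC xC; rewrite /p (component_sub hC xC).
  by rewrite -(component_eq e_sym hC xC).
exists p, r; split.
- by rewrite /p setD11.
- constructor=> // C hC; have [pC_c tC _] := g_below C hC.
  exists (g C).2; first exact: elim_tree_root tC.
  split; first by rewrite (p_comp C) ?(elim_tree_root tC).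
  by apply: elim_tree_eq_in tC => x xC; rewrite (p_comp C).
- move=> x y xSr; have hC := component_comp_of e xSr.
  rewrite (p_comp _ _ hC (mem_comp_of e xSr)); have [pC_c _ pC_below] := g_below _ hC.
  have [xc|xc] := eqVneq x (g (comp_of e (S :\ r) x)).2.
    rewrite -xc in pC_c; rewrite pC_c => -[<-]; case/setD1P: xSr => xr xS.
    by case: (r_top x xS) => // rx; rewrite rx eqxx in xr.
  by apply: pC_below; rewrite in_setD1 xc mem_comp_of.
Qed.

Lemma normalize x0 : connected_in e [set: T] -> exists p r,
  [/\ p r = None, elim_tree e p [set: T] r & forall x, root_path p x \subset root_path F x].
Proof.
move=> connT; have [p [r [pr t p_below]]] := elim_tree_below None (in_setT x0) connT.
have up_anc j x v : up p j x = Some v -> ancestor_or_self F v x.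
  elim: j v => [v [<-]|j IH v]; first by left.
  rewrite upS; case E: (up p j x) => [z|] //= zv.
  have zr : z != r by apply/eqP=> zr; rewrite zr pr in zv.
  apply: ancestor_or_self_trans (IH _ E); right.
  by apply: p_below zv; rewrite !inE zr.
exists p, r; split=> // x; apply/subsetP=> u /(mem_root_path (elim_tree_td pr t).1) pu.
by apply/(mem_root_path F_td.1); case: pu => [->|[k _ /up_anc //]]; left.
Qed.

End Normalization.

End ElimTrees.

Section Chain.
Variables (T : finType) (x0 : T) (s : seq T).
Hypotheses (s_uniq : uniq s) (s_all : forall x, x \in s).

Definition chain_parent x := if index x s is i.+1 then Some (nth x0 s i) else None.

Lemma chain_parent_nth i : i.+1 < size s -> chain_parent (nth x0 s i.+1) = Some (nth x0 s i).
Proof. by move=> lt_s; rewrite /chain_parent index_uniq. Qed.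

Lemma up_chain_parent k x : k <= index x s ->
  up chain_parent k x = Some (nth x0 s (index x s - k)).
Proof.
elim: k => [|k IH] le_kx; first by rewrite subn0 nth_index.
rewrite upS IH; last exact: ltnW.
rewrite -(subnSK le_kx); apply: chain_parent_nth.
by rewrite subnSK // (leq_ltn_trans (leq_subr _ _)) ?index_mem.
Qed.

Lemma chain_parent_ancestor a b : index a s < index b s -> ancestor chain_parent a b.
Proof.
move=> ab; exists (index b s - index a s); first by rewrite subn_gt0.
rewrite up_chain_parent; last exact: leq_subr.
by rewrite subKn ?nth_index // ltnW.
Qed.

Lemma chain_parent_td (e : rel T) : irreflexive e -> td_decomposition e chain_parent.
Proof.
move=> e_irr; split=> [x|a b eab].
  exists (index x s).+1; rewrite upS up_chain_parent ?subnn; last exact: leqnn.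
  have s_gt0 : 0 < size s by apply: leq_ltn_trans (leq0n (index x s)) _; rewrite index_mem.
  by change (chain_parent (nth x0 s 0) = None); rewrite /chain_parent index_uniq.
case: (ltngtP (index a s) (index b s)) => [ab|ba|ab].
- by left; apply: chain_parent_ancestor.
- by right; apply: chain_parent_ancestor.
- by move: eab; rewrite -(nth_index x0 (s_all a)) ab nth_index // e_irr.
Qed.

End Chain.

Section Swap.
Variables (T : finType) (e : rel T) (F : T -> option T) (v w : T).
Local Notation sg := (tperm v w).

Definition swap_parent x := omap sg (F (sg x)).

Lemma up_swap_parent k x : up swap_parent k x = omap sg (up F k (sg x)).
Proof.
elim: k => [|k IH]; first by rewrite /= tpermK.
by rewrite !upS IH; case: (up F k (sg x)) => //= a; rewrite /swap_parent tpermK.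
Qed.

Lemma omap_tperm_eq o u : (omap sg o == Some u) = (o == Some (sg u)).
Proof.
case: o => [a|] //=; rewrite !(inj_eq Some_inj).
exact: (can2_eq (tpermK v w) (tpermK v w)).
Qed.

Lemma ancestor_swap_parent a b : ancestor swap_parent a b <-> ancestor F (sg a) (sg b).
Proof.
split=> -[k k_gt0 hk]; exists k => //; apply/eqP.
- by rewrite -omap_tperm_eq -up_swap_parent hk.
- by rewrite up_swap_parent omap_tperm_eq hk.
Qed.

Lemma card_root_path_swap x : #|root_path swap_parent x| = #|root_path F (sg x)|.
Proof.
suff -> : root_path swap_parent x = sg @^-1: root_path F (sg x).
  exact/card_preimset/perm_inj.
apply/setP=> u; rewrite !inE; apply/existsP/existsP=> -[k hk]; exists k.
- by rewrite -omap_tperm_eq -up_swap_parent.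
- by rewrite up_swap_parent omap_tperm_eq.
Qed.

Lemma forest_depth_swap : forest_depth swap_parent = forest_depth F.
Proof.
rewrite /forest_depth (reindex_inj (@perm_inj _ sg)).
by apply: eq_bigr => x _; rewrite card_root_path_swap tpermK.
Qed.

Hypotheses (F_rf : rooted_forest F) (wv : ancestor F w v) (vw : v != w).

Lemma path_weight_swap_lt wt : wt w < wt v -> path_weight wt swap_parent < path_weight wt F.
Proof.
move=> wt_wv; rewrite /path_weight (reindex_inj (@perm_inj _ sg)) /=.
have rp_wv := card_root_path_lt F_rf wv.
rewrite (bigD1 v) // (bigD1 w) 1?eq_sym //= [in X in _ < X](bigD1 v) //.
rewrite [in X in _ < X](bigD1 w) 1?eq_sym //= !card_root_path_swap !tpermK tpermL tpermR.
set R1 := \sum_(i | _) _; set R2 := \sum_(i | _) _.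
have -> : R1 = R2.
  apply: eq_bigr => i /andP[iv iw].
  by rewrite card_root_path_swap tpermK tpermD // eq_sym.
nia.
Qed.

Hypotheses (e_sym : symmetric e) (e_irr : irreflexive e) (F_td : td_decomposition e F).
Hypothesis w_nbhd : forall x, x != v -> e w x -> e v x.

Lemma swap_parent_td : td_decomposition e swap_parent.
Proof.
split=> [x|a b eab].
  by have [k hk] := F_td.1 (sg x); exists k; rewrite up_swap_parent hk.
rewrite !ancestor_swap_parent.
have comp_v y : e v y -> ancestor F (sg v) (sg y) \/ ancestor F (sg y) (sg v).
  rewrite tpermL; case: tpermP => [->|->|yv yw] evy; [by rewrite e_irr in evy|by left|].
  case: (F_td.2 _ _ evy) => [vy|yv']; first by left; exact: ancestor_trans wv vy.
  by case: (ancestors_comparable wv yv') => [wy|wy|yw']; [by case: (yw (esym wy))|left|right].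
have comp_w y : e w y -> ancestor F (sg w) (sg y) \/ ancestor F (sg y) (sg w).
  rewrite tpermR; case: tpermP => [->|->|yv yw] ewy; [by right|by rewrite e_irr in ewy|].
  by apply: F_td.2; apply: w_nbhd ewy; apply/eqP.
move: eab; have [->|av] := eqVneq a v; first exact: comp_v.
have [->|aw] := eqVneq a w; first exact: comp_w.
have [->|bv] := eqVneq b v; first by rewrite e_sym => /comp_v /or_comm.
have [->|bw] := eqVneq b w; first by rewrite e_sym => /comp_w /or_comm.
by rewrite !tpermD 1?eq_sym //; apply: F_td.2.
Qed.

End Swap.

Section Domination.
Variables (T : finType) (e : rel T) (lab : T -> int).
Hypothesis e_sym : symmetric e.

Definition domination_weight x :=
  #|nbhd e x| * #|T|.+1 + #|[set y | (lab y < lab x)%R]|.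

Lemma dominates_neq v w : dominates e lab v w -> v != w.
Proof. by case/andP. Qed.

Lemma dominates_nbhd_sub v w : dominates e lab v w -> nbhd e w :\ v \subset nbhd e v :\ w.
Proof. by case/andP=> _ /orP[/proper_sub | /andP[/eqP-> _]]. Qed.

Lemma dominates_nbhd v w : dominates e lab v w -> forall x, x != v -> e w x -> e v x.
Proof.
move=> /dominates_nbhd_sub /subsetP sub x xv ewx.
have /sub : x \in nbhd e w :\ v by rewrite !inE xv.
by rewrite !inE => /andP[].
Qed.

Lemma dominates_weight_lt v w :
  dominates e lab v w -> domination_weight w < domination_weight v.
Proof.
move=> /andP[vw dom]; rewrite /domination_weight.
have card_w := cardsD1 v (nbhd e w); have card_v := cardsD1 w (nbhd e v).
rewrite !inE e_sym in card_w card_v.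
have rank_lt x : #|[set y | (lab y < lab x)%R]| < #|T|.+1 by rewrite ltnS max_card.
have := rank_lt v; have := rank_lt w.
case/orP: dom => [/proper_card lt_nbhd | /andP[/eqP eq_nbhd lt_lab]].
  have deg_lt : #|nbhd e w| < #|nbhd e v| by move: card_w card_v; case: (e v w); lia.
  have := leq_mul deg_lt (leqnn #|T|.+1); lia.
have rank_lt_vw : #|[set y | (lab y < lab w)%R]| < #|[set y | (lab y < lab v)%R]|.
  apply: proper_card; apply/properP; split.
    by apply/subsetP=> y; rewrite !inE => /lt_trans; apply.
  by exists w; rewrite !inE ?lt_lab ?ltxx.
have -> : #|nbhd e w| = #|nbhd e v| by rewrite card_w card_v eq_nbhd.
lia.
Qed.

End Domination.

Lemma ex_minimal (P : nat -> Prop) :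
  (exists n, P n) -> exists n, P n /\ forall m, P m -> n <= m.
Proof.
move=> exP; have [n [[Pn n_min] _]] :=
  dec_inh_nat_subset_has_unique_least_element P (fun n => classic (P n)) exP.
by exists n; split=> // m /n_min /ssrnat.leP.
Qed.

Section OptimalElimTree.
Variables (T : finType) (e : rel T) (wt : T -> nat).
Hypotheses (e_sym : symmetric e) (e_irr : irreflexive e).
Hypothesis connT : connected_in e [set: T].

Lemma exists_optimal_elim_tree (x0 : T) : exists p r,
  [/\ p r = None, elim_tree e p [set: T] r,
      forall F, td_decomposition e F -> forest_depth p <= forest_depth F &
      forall F, td_decomposition e F -> forest_depth F = forest_depth p ->
        path_weight wt p <= path_weight wt F].
Proof.
pose is_elim p := exists r, p r = None /\ elim_tree e p [set: T] r.
have normal F : td_decomposition e F ->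
    exists2 p, is_elim p & forall x, root_path p x \subset root_path F x.
  move=> F_td; have [p [r [pr t pF]]] := normalize e_sym e_irr F_td x0 connT.
  by exists p => //; exists r.
have [p0 p0_elim _] := normal _ (chain_parent_td x0 (enum_uniq T) (mem_enum T) e_irr).
pose depth_of_elim d := exists2 p, is_elim p & forest_depth p = d.
have [D [[pD pD_elim dD] D_min]] :
    exists D, depth_of_elim D /\ forall d, depth_of_elim d -> D <= d.
  by apply: ex_minimal; exists (forest_depth p0), p0.
pose weight_of_elim m := exists p, [/\ is_elim p, forest_depth p = D & path_weight wt p = m].
have [M [[p [[r [pr t]] dp wp]] M_min]] :
    exists M, weight_of_elim M /\ forall m, weight_of_elim m -> M <= m.
  by apply: ex_minimal; exists (path_weight wt pD), pD.
exists p, r; split=> // F F_td; have [q q_elim qF] := normal F F_td.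
  by rewrite dp; apply: leq_trans (forest_depth_le qF); apply: D_min; exists q.
move=> dF; have dq : forest_depth q = D.
  apply/eqP; rewrite eqn_leq -{1}dp -dF forest_depth_le //.
  by apply: D_min; exists q.
by rewrite wp; apply: leq_trans (path_weight_le wt qF); apply: M_min; exists q.
Qed.

End OptimalElimTree.

Local Open Scope fset_scope.

Theorem mainTheorem1 (V : {fset int}) (e : rel V) :
  symmetric e -> irreflexive e ->
  V != fset0 ->
  connected_in e [set: V] ->
  exists (par : V -> option V) (r : V),
    [/\ par r = None,
        elim_tree e par [set: V] r,
        is_treedepth e (forest_depth par) &
        forall w v : V, dominates e (fun x : V => fsval x) v w ->
          ~ ancestor par w v].
Proof.
move=> e_sym e_irr V_neq0 connV; have [a aV] := fset0Pn _ V_neq0.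
have [p [r [pr t p_min p_opt]]] := exists_optimal_elim_tree
  (domination_weight e (fun x : V => fsval x)) e_sym e_irr connV [` aV].
have p_td := elim_tree_td e_sym e_irr pr t.
exists p, r; split=> //; first by split=> [|F /p_min //]; exists p.
move=> w v v_dom_w wv.
have swap_td := swap_parent_td wv e_sym e_irr p_td (dominates_nbhd v_dom_w).
have := p_opt _ swap_td (forest_depth_swap _ _ _).
by rewrite leqNgt (path_weight_swap_lt p_td.1 wv (dominates_neq v_dom_w))
  ?(dominates_weight_lt e_sym v_dom_w).
Qed.
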